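(* Let $M\ge1$ and $\chi,\tilde\chi\in\widetilde{\mathcal W}^-\cup\mathcal W^+_M$ with $\tilde\chi\le\chi$, and let $Q=Q_{\chi,\tilde\chi}$. Then the function $h(t)=\dfrac{Q(t)^2}{t}$ is non-increasing on $\mathbb R_{>0}$.
   Context: $\widetilde{\mathcal W}^-$: convex non-decreasing $\chi:\mathbb R_{\le0}\to\mathbb R_{\le0}$, $\chi(0)=0$, $\chi\not\equiv0$. $\mathcal W^+_M$: increasing concave $\chi:\mathbb R_{\le0}\to\mathbb R_{\le0}$, $\chi(0)=0$, $\chi<0$ on $(-\infty,0)$, $|t\chi'(t)|\le M|\chi(t)|$ for $t\le0$. For $\epsilon>0$, $Q_0(\epsilon)=\sup_{t\le-1}\chi(\epsilon t)/\tilde\chi(t)$; $Q(t)=1$ for $t\ge1$; for $0<t<1$, $Q(t)=(Q_0(t)/Q_0(1))^{1/2}$ if $\chi\in\widetilde{\mathcal W}^-$ and $Q(t)=t^{1/2}$ if $\chi\in\mathcal W^+_M$; $Q(0)=\lim_{s\to0^+}Q(s)$. *)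

From HB Require Import structures.
From mathcomp Require Import all_boot all_order all_algebra.
From mathcomp Require Import all_classical all_reals all_analysis.
Set Implicit Arguments. Unset Strict Implicit. Unset Printing Implicit Defensive.
Import Order.TTheory GRing.Theory Num.Theory.
Import numFieldNormedType.Exports.
Local Open Scope classical_set_scope.
Local Open Scope ring_scope.

Section Weights.
Variable R : realType.
Implicit Types (chi chit : R -> R) (M t eps : R).

(* functions R_{<=0} -> R_{<=0} are modelled as R -> R; only values on t <= 0 matter *)
Definition maps_npos chi := forall t, t <= 0 -> chi t <= 0.

Definition convex_npos chi := forall x y a, x <= 0 -> y <= 0 -> 0 <= a -> a <= 1 ->
  chi (a * x + (1 - a) * y) <= a * chi x + (1 - a) * chi y.

Definition concave_npos chi := forall x y a, x <= 0 -> y <= 0 -> 0 <= a -> a <= 1 ->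
  a * chi x + (1 - a) * chi y <= chi (a * x + (1 - a) * y).

Definition Wminus chi : Prop :=
  [/\ maps_npos chi, convex_npos chi,
      (forall s t, s <= t -> t <= 0 -> chi s <= chi t),
      chi 0 = 0 &
      exists t, t <= 0 /\ chi t != 0].

Definition WplusM M chi : Prop :=
  [/\ maps_npos chi, concave_npos chi,
      (forall s t, s < t -> t <= 0 -> chi s < chi t),
      chi 0 = 0 /\ (forall t, t < 0 -> chi t < 0) &
      (forall t, t < 0 -> derivable chi t 1 -> `|t * derive1 chi t| <= M * `|chi t|)].

Definition Q0 chi chit eps : R :=
  sup [set chi (eps * t) / chit t | t in `]-oo, -1]].

Definition Q chi chit t : R :=
  if 1 <= t then 1
  else if asbool (Wminus chi) then Num.sqrt (Q0 chi chit t / Q0 chi chit 1)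
  else Num.sqrt t.

End Weights.

From HB Require Import structures.
From mathcomp Require Import all_boot all_order all_algebra.
From mathcomp Require Import all_classical all_reals all_analysis.
From mathcomp Require Import ring lra.
Set Implicit Arguments.
Unset Strict Implicit.
Unset Printing Implicit Defensive.

Import Order.TTheory GRing.Theory Num.Theory.
Local Open Scope classical_set_scope.
Local Open Scope ring_scope.

(* For t >= 1, h(t) = 1/t.  Below 1, Q(t)^2 = q(t)/q(1) with q = Q_0 if chi
   is in W^- and q = id otherwise, so it suffices that q(t)/t is
   non-increasing on (0,1]; at the junction t = 1 this gives q(1) <= q(s)/s.
   For Q_0, convexity of chi with chi(0) = 0 gives chi(s u) <= (s/t) chi(t u)
   for s <= t; dividing by chit(u) < 0 and taking the supremum over u <= -1
   yields Q_0(t) <= (t/s) Q_0(s). *)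

Definition capped_sqrt_ratio (R : rcfType) (q : R -> R) (t : R) : R :=
  if 1 <= t then 1 else Num.sqrt (q t / q 1).

Lemma capped_sqrt_ratio_sqr_div_le (R : rcfType) (q : R -> R) :
  (forall t, 0 < t -> t <= 1 -> 0 < q t) ->
  (forall s t, 0 < s -> s <= t -> t <= 1 -> q t / t <= q s / s) ->
  forall s t, 0 < s -> s <= t ->
    capped_sqrt_ratio q t ^+ 2 / t <= capped_sqrt_ratio q s ^+ 2 / s.
Proof.
move=> q_gt0 q_div_le s t s0 st; have t0 : 0 < t by lra.
have q1 : 0 < q 1 by apply: q_gt0.
have sqr_above u : 1 <= u -> capped_sqrt_ratio q u ^+ 2 = 1.
  by move=> u1; rewrite /capped_sqrt_ratio u1 expr1n.
have sqr_below u : 0 < u -> u < 1 -> capped_sqrt_ratio q u ^+ 2 = q u / q 1.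
  move=> u0 u1; rewrite /capped_sqrt_ratio leNgt u1 /= sqr_sqrtr //.
  by rewrite divr_ge0 // ltW // q_gt0 // ltW.
case: (lerP 1 s) => s1.
  by rewrite !sqr_above ?(le_trans s1) // !mul1r lef_pV2 ?posrE.
rewrite (sqr_below s) //; case: (lerP 1 t) => t1.
  have qs_ge : q 1 <= q s / s by rewrite -[q 1]divr1 q_div_le // ltW.
  rewrite sqr_above // mul1r (@le_trans _ _ 1) ?invf_le1 //.
  by rewrite mulrAC ler_pdivlMr // mul1r.
rewrite sqr_below // mulrAC [q s / _ / _]mulrAC.
by rewrite ler_pM2r ?invr_gt0 // q_div_le // ltW.
Qed.

Lemma convex_npos_scale_le (R : realType) (chi : R -> R) (a x : R) :
  convex_npos chi -> chi 0 = 0 -> 0 <= a -> a <= 1 -> x <= 0 ->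
  chi (a * x) <= a * chi x.
Proof.
move=> cvx chi0 a0 a1 x0; have := cvx x 0 a x0 (lexx _) a0 a1.
by rewrite !mulr0 !addr0 chi0 mulr0 addr0.
Qed.

Lemma Wminus_lt0 (R : realType) (chi : R -> R) (u : R) :
  Wminus chi -> u < 0 -> chi u < 0.
Proof.
case=> chi_le0 cvx chi_mono chi0 [t0 [t0_le0 chi_t0_neq0]] u0.
have chi_t0_lt0 : chi t0 < 0 by rewrite lt_neqAle chi_t0_neq0 chi_le0.
have t0_lt0 : t0 < 0.
  by rewrite lt_neqAle t0_le0 andbT; apply: contraNneq chi_t0_neq0 => ->; rewrite chi0.
case: (lerP u t0) => [ut0|t0u]; first exact: le_lt_trans (chi_mono _ _ ut0 t0_le0) _.
have a0 : 0 < u / t0 by rewrite ltr_ndivlMr // mul0r.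
have a1 : u / t0 <= 1 by rewrite ler_ndivrMr // mul1r ltW.
have := convex_npos_scale_le cvx chi0 (ltW a0) a1 t0_le0.
by rewrite divfK ?lt_eqF // => /le_lt_trans; apply; rewrite pmulr_rlt0.
Qed.

Section ConvexQ0.
Variables (R : realType) (chi chit : R -> R).
Hypothesis Wchi : Wminus chi.
Hypothesis chit_le : forall t, t <= 0 -> chit t <= chi t.

Let chit_lt0 u : u < 0 -> chit u < 0.
Proof. by move=> u0; apply: le_lt_trans (chit_le (ltW u0)) (Wminus_lt0 Wchi u0). Qed.

Let ratio_in_set e u : u <= -1 ->
  [set chi (e * t) / chit t | t in `]-oo, -1]] (chi (e * u) / chit u).
Proof. by move=> u1; exists u => //=; rewrite in_itv. Qed.

Lemma Q0_ratio_ub (e : R) : 0 < e -> e <= 1 ->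
  ubound [set chi (e * t) / chit t | t in `]-oo, -1]] 1.
Proof.
case: Wchi => _ _ chi_mono _ _ e0 e1 _ [u + <-]; rewrite /= in_itv /= => u1.
have u0 : u < 0 by lra.
rewrite ler_ndivrMr ?chit_lt0 // mul1r (le_trans (chit_le (ltW u0))) //.
apply: chi_mono; last by rewrite pmulr_rle0 // ltW.
by rewrite -[leLHS]mul1r ler_wnM2r // ltW.
Qed.

Lemma Q0_gt0 (e : R) : 0 < e -> e <= 1 -> 0 < Q0 chi chit e.
Proof.
move=> e0 e1; apply: lt_le_trans (ub_le_sup _ (ratio_in_set e (lexx _))).
  rewrite mulrN1 ltr_ndivlMr ?mul0r ?chit_lt0 ?ltrN10 //.
  by apply: Wminus_lt0; rewrite // oppr_lt0.
by exists 1; apply: Q0_ratio_ub.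
Qed.

Lemma Q0_le_scale (s t : R) : 0 < s -> s <= t -> s <= 1 ->
  Q0 chi chit t <= t / s * Q0 chi chit s.
Proof.
move=> s0 st s1; have t0 : 0 < t by lra.
case: Wchi => _ cvx _ chi0 _.
apply: ge_sup; first by exists (chi (t * -1) / chit (-1)); apply: ratio_in_set.
move=> _ [u + <-]; rewrite /= in_itv /= => u1; have u0 : u < 0 by lra.
rewrite (@le_trans _ _ (t / s * (chi (s * u) / chit u))) //; last first.
  rewrite ler_pM2l ?divr_gt0 //; apply: ub_le_sup (ratio_in_set s u1).
  by exists 1; apply: Q0_ratio_ub.
rewrite mulrA ler_ndivlMr ?chit_lt0 // divfK ?lt_eqF ?chit_lt0 //.
have scale : chi (s * u) <= s / t * chi (t * u).
  have -> : s * u = s / t * (t * u) by field; rewrite gt_eqF.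
  apply: convex_npos_scale_le => //; first by rewrite divr_ge0 ?ltW.
    by rewrite ler_pdivrMr // mul1r.
  by rewrite pmulr_rle0 // ltW.
rewrite (le_trans (ler_wpM2l (ltW (divr_gt0 t0 s0)) scale)) //.
by rewrite mulrA -invf_div mulVf ?mul1r // gt_eqF // divr_gt0.
Qed.

Lemma Q0_div_le (s t : R) : 0 < s -> s <= t -> s <= 1 ->
  Q0 chi chit t / t <= Q0 chi chit s / s.
Proof.
move=> s0 st s1; have t0 : 0 < t by lra.
have -> : Q0 chi chit s / s = t / s * Q0 chi chit s / t.
  by rewrite mulrAC [t / s / t]mulrAC divff ?gt_eqF // mul1r mulrC.
by rewrite ler_pM2r ?invr_gt0 // Q0_le_scale.
Qed.

End ConvexQ0.

Theorem lemma3p6 (R : realType) (M : R) (chi chit : R -> R) :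
  1 <= M ->
  (Wminus chi \/ WplusM M chi) ->
  (Wminus chit \/ WplusM M chit) ->
  (forall t, t <= 0 -> chit t <= chi t) ->
  forall s t, 0 < s -> s <= t ->
    (Q chi chit t) ^+ 2 / t <= (Q chi chit s) ^+ 2 / s.
Proof.
move=> _ _ _ chit_le s t s0 st.
case: (asboolP (Wminus chi)) => [Wchi | notWchi].
  rewrite /Q asboolT //.
  apply: (capped_sqrt_ratio_sqr_div_le (q := Q0 chi chit)) => //.
    by move=> u; apply: Q0_gt0.
  by move=> u v u0 uv v1; apply: Q0_div_le => //; apply: le_trans v1.
have Q_id u : Q chi chit u = capped_sqrt_ratio id u.
  by rewrite /Q asboolF // /capped_sqrt_ratio divr1.
rewrite !Q_id; apply: capped_sqrt_ratio_sqr_div_le => // u v u0 uv _.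
by rewrite !divff ?gt_eqF //; lra.
Qed.
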